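(* Let $\{a_n\}_{n\geq 0}$ be a sequence of non-negative real numbers and let $0<p<1$. If $\{a^p_n\}_{n\geq 0}$ converges to a finite limit $a\in\mathbb{R}$, then $a_n=O(\sqrt{n})$.
   Context: $a^p_n=\sum_{i=0}^n\binom{n}{i}p^i(1-p)^{n-i}a_i$. For $f,g:\mathbb{N}\to\mathbb{R}^+_0$, $f(n)=O(g(n))$ means there is $C>0$ with $f(n)\leq Cg(n)$ for all sufficiently large $n$. *)

From Stdlib Require Import Reals.
Open Scope R_scope.

Definition binom_transform (p : R) (a : nat -> R) (n : nat) : R :=
  sum_f_R0 (fun i => Binomial.C n i * p ^ i * (1 - p) ^ (n - i) * a i) n.

Definition bigO_nat (f g : nat -> R) : Prop :=
  exists C : R, 0 < C /\ exists N : nat, forall n : nat, (N <= n)%nat -> f n <= C * g n.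

From Stdlib Require Import Reals Lra Lia Arith ZArith.
Open Scope R_scope.

(* Write b(n, i) = P(Bin(n, p) = i), so that a^p_n >= b(n, i) a_i.  Take n = floor (i / p),
   so that i lies in [n p, n p + 1].  By Chebyshev, Bin(n, p) gives mass >= 3/4 to the window
   |j - n p| <= sqrt n, which contains at most 2 sqrt n + 1 integers; on this window the pmf
   is at most e^(2/p) b(n, i), since it decreases above the mean and each step towards 0
   below the mean multiplies it by at most 1 + 1/(n p).  Hence b(n, i) >= c / sqrt n
   >= c' / sqrt i, and a_i <= a^p_n / b(n, i) = O(sqrt i). *)

Lemma pow_1plus_le_exp x d : 0 <= x -> (1 + x) ^ d <= exp (INR d * x).
Proof.
  intros Hx; induction d; [simpl; rewrite Rmult_0_l, exp_0; lra|].
  rewrite S_INR, Rmult_plus_distr_r, Rmult_1_l, exp_plus; simpl.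
  pose proof (exp_ineq1_le x); pose proof (pow_le (1 + x) d ltac:(lra)).
  rewrite Rmult_comm; apply Rmult_le_compat; lra.
Qed.

Lemma sum_telescope (F : nat -> R) N :
  sum_f_R0 (fun j => F (S j) - F j) N = F (S N) - F 0%nat.
Proof. induction N; simpl; [|rewrite IHN]; ring. Qed.

Definition in_window (x r : R) (j : nat) : R :=
  if Rle_dec (Rabs (INR j - x)) r then 1 else 0.

(* Each window point increases [t |-> clamp (t - x + r) to [0, 2r + 1]] by at least 1. *)
Lemma sum_in_window_le x r N : 0 <= r -> sum_f_R0 (in_window x r) N <= 2 * r + 1.
Proof.
  intros Hr.
  set (F := fun t : nat => Rmin (2 * r + 1) (Rmax 0 (INR t - x + r))).
  assert (H : sum_f_R0 (in_window x r) N <= sum_f_R0 (fun j => F (S j) - F j) N).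
  { apply sum_Rle; intros j _; unfold in_window, F; rewrite S_INR.
    unfold Rmin, Rmax, Rabs; repeat (destruct Rle_dec || destruct Rcase_abs); lra. }
  rewrite sum_telescope in H.
  assert (F (S N) <= 2 * r + 1) by apply Rmin_l.
  assert (0 <= F 0%nat) by (unfold F, Rmin, Rmax; repeat destruct Rle_dec; lra).
  lra.
Qed.

Lemma sum_f_R0_ge_term (f : nat -> R) n i :
  (forall j, 0 <= f j) -> (i <= n)%nat -> f i <= sum_f_R0 f n.
Proof.
  intros Hf; induction n; intros Hi.
  - replace i with 0%nat by lia; simpl; lra.
  - simpl; destruct (Nat.eq_dec i (S n)) as [->|Hne].
    + pose proof (cond_pos_sum f n Hf); lra.
    + specialize (IHn ltac:(lia)); specialize (Hf (S n)); lra.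
Qed.

Section BinomialPmf.

Variable p : R.

(* The binomial probabilities P(Bin(n, p) = j), defined through Pascal's rule so that
   moments can be computed by induction on n. *)
Fixpoint binom_pmf (n j : nat) : R :=
  match n, j with
  | O, O => 1
  | O, S _ => 0
  | S n', O => (1 - p) * binom_pmf n' O
  | S n', S j' => p * binom_pmf n' j' + (1 - p) * binom_pmf n' (S j')
  end.

Lemma binom_pmf_gt n j : (n < j)%nat -> binom_pmf n j = 0.
Proof.
  revert j; induction n; intros j H; destruct j; try lia; simpl; auto.
  rewrite !IHn by lia; ring.
Qed.

Lemma binom_pmf_closed n j :
  (j <= n)%nat -> binom_pmf n j = C n j * p ^ j * (1 - p) ^ (n - j).
Proof.
  revert j; induction n; intros j H.
  - destruct j; [|lia]. unfold C; simpl; field.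
  - pose proof (not_0_INR _ (fact_neq_0 n)).
    pose proof (not_0_INR _ (fact_neq_0 (S n))).
    destruct j as [|j]; simpl binom_pmf.
    + rewrite IHn by lia; unfold C; rewrite !Nat.sub_0_r.
      change (INR (fact 0)) with 1; simpl pow.
      unfold Rdiv; rewrite !Rmult_1_l, !Rinv_r by auto; ring.
    + destruct (Nat.eq_dec j n) as [->|Hj].
      * rewrite (binom_pmf_gt n (S n)), IHn by lia; unfold C; rewrite !Nat.sub_diag.
        change (INR (fact 0)) with 1; simpl pow.
        unfold Rdiv; rewrite !Rmult_1_r, !Rinv_r by auto; ring.
      * rewrite !IHn, <- pascal by lia.
        replace (S n - S j)%nat with (S (n - S j)) by lia.
        replace (n - j)%nat with (S (n - S j)) by lia.
        simpl; ring.
Qed.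

Lemma binom_pmf_ge0 n j : 0 <= p <= 1 -> 0 <= binom_pmf n j.
Proof.
  intros Hp; revert j; induction n; intros [|j]; simpl; try lra.
  - specialize (IHn 0%nat); nra.
  - specialize (IHn j) as H1; specialize (IHn (S j)) as H2; nra.
Qed.

Lemma sum_binom_pmf_S (f : nat -> R) n :
  sum_f_R0 (fun j => binom_pmf (S n) j * f j) (S n) =
  p * sum_f_R0 (fun j => binom_pmf n j * f (S j)) n
  + (1 - p) * sum_f_R0 (fun j => binom_pmf n j * f j) n.
Proof.
  assert (Hshift : sum_f_R0 (fun j => binom_pmf n j * f j) n =
     binom_pmf n 0 * f 0%nat + sum_f_R0 (fun j => binom_pmf n (S j) * f (S j)) n).
  { rewrite <- (Rplus_0_r (sum_f_R0 _ n)), <- (Rmult_0_l (f (S n))),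
      <- (binom_pmf_gt n (S n)), <- tech5 by lia.
    rewrite decomp_sum by lia; reflexivity. }
  rewrite decomp_sum, Hshift by lia; simpl pred.
  rewrite Rmult_plus_distr_l, !scal_sum.
  rewrite (sum_eq _ (fun j => binom_pmf n j * f (S j) * p
                              + binom_pmf n (S j) * f (S j) * (1 - p)))
    by (intros; simpl; ring).
  rewrite plus_sum; simpl; ring.
Qed.

(* Mean [n p] and variance [n p (1 - p)], packaged as one identity stable under the
   recursion [c -> c - 1]. *)
Lemma binom_pmf_quadratic_moment n al be c :
  sum_f_R0 (fun j => binom_pmf n j * (al + be * (INR j - c) ^ 2)) n =
  al + be * (INR n * p * (1 - p) + (INR n * p - c) ^ 2).
Proof.
  revert c; induction n; intros c; [simpl; ring|].
  rewrite sum_binom_pmf_S.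
  rewrite (sum_eq _ (fun j => binom_pmf n j * (al + be * (INR j - (c - 1)) ^ 2)))
    by (intros; rewrite S_INR; f_equal; ring).
  rewrite !IHn, S_INR; ring.
Qed.

Lemma binom_pmf_succ_ratio n k : (k < n)%nat ->
  binom_pmf n (S k) * (INR k + 1) * (1 - p) = binom_pmf n k * (INR n - INR k) * p.
Proof.
  intros H; rewrite !binom_pmf_closed, pascal_step3, S_INR, minus_INR by lia.
  replace (n - k)%nat with (S (n - S k)) by lia; cbn [pow].
  field; pose proof (pos_INR k); lra.
Qed.

Hypothesis Hp : 0 < p < 1.

Lemma binom_pmf_S_le_above_mean n k : INR n * p <= INR k -> binom_pmf n (S k) <= binom_pmf n k.
Proof.
  intros Hk.
  pose proof (binom_pmf_ge0 n k ltac:(lra)).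
  destruct (le_lt_dec n k) as [Hkn|Hkn]; [rewrite binom_pmf_gt by lia; lra|].
  pose proof (binom_pmf_succ_ratio n k Hkn) as Hratio.
  pose proof (binom_pmf_ge0 n (S k) ltac:(lra)).
  assert (Hpos : 0 < (INR k + 1) * (1 - p)) by (pose proof (pos_INR k); nra).
  apply (Rmult_le_reg_r ((INR k + 1) * (1 - p))); nra.
Qed.

Lemma binom_pmf_le_S_below_mean n k : (k < n)%nat -> INR k <= INR n * p ->
  binom_pmf n k <= (1 + / (INR n * p)) * binom_pmf n (S k).
Proof.
  intros Hkn Hk.
  assert (HkR : INR k < INR n) by (apply lt_INR; auto).
  pose proof (pos_INR k).
  assert (Hnp : 0 < INR n * p) by nra.
  pose proof (binom_pmf_succ_ratio n k Hkn) as Hratio.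
  pose proof (binom_pmf_ge0 n k ltac:(lra)).
  pose proof (binom_pmf_ge0 n (S k) ltac:(lra)).
  assert (Hfactor : (INR k + 1) * (1 - p) <= (1 + / (INR n * p)) * ((INR n - INR k) * p)).
  { replace ((1 + / (INR n * p)) * ((INR n - INR k) * p))
      with ((INR n * p + 1) * (1 - p) + (INR n * p - INR k) * (p + / INR n))
      by (field; split; lra).
    assert (0 < / INR n) by (apply Rinv_0_lt_compat; lra).
    assert (0 <= (INR n * p - INR k) * (p + / INR n)) by (apply Rmult_le_pos; lra).
    nra. }
  apply (Rmult_le_reg_r ((INR n - INR k) * p)); nra.
Qed.

Lemma binom_pmf_decr_above_mean n i d :
  INR n * p <= INR i -> binom_pmf n (i + d) <= binom_pmf n i.
Proof.
  intros Hi; induction d; [rewrite Nat.add_0_r; lra|].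
  rewrite Nat.add_succ_r; eapply Rle_trans; [|exact IHd].
  apply binom_pmf_S_le_above_mean; rewrite plus_INR; pose proof (pos_INR d); lra.
Qed.

Lemma binom_pmf_growth_below_mean n i d : (i <= n)%nat -> INR i <= INR n * p + 1 ->
  (d <= i)%nat -> binom_pmf n (i - d) <= (1 + / (INR n * p)) ^ d * binom_pmf n i.
Proof.
  intros Hin Hi; induction d as [|d IHd]; intros Hd; [rewrite Nat.sub_0_r; simpl; lra|].
  assert (Hk : INR (i - S d) <= INR n * p).
  { rewrite minus_INR, S_INR by lia; pose proof (pos_INR d); lra. }
  pose proof (binom_pmf_le_S_below_mean n (i - S d) ltac:(lia) Hk) as Hstep.
  replace (S (i - S d)) with (i - d)%nat in Hstep by lia.
  assert (0 < INR n * p) by (pose proof (lt_0_INR n ltac:(lia)); nra).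
  assert (0 <= / (INR n * p)) by (left; apply Rinv_0_lt_compat; lra).
  specialize (IHd ltac:(lia)); simpl pow; nra.
Qed.

Lemma binom_pmf_window_mass n : (1 <= n)%nat ->
  3 / 4 <= sum_f_R0 (fun j => binom_pmf n j * in_window (INR n * p) (sqrt (INR n)) j) n.
Proof.
  intros Hn.
  assert (HnR : 1 <= INR n) by (apply (le_INR 1); lia).
  assert (Hinv : 0 < / INR n) by (apply Rinv_0_lt_compat; lra).
  (* Chebyshev: [1 - (j - n p)^2 / n] minorizes the window indicator and has mean
     [1 - p (1 - p) >= 3/4]. *)
  pose proof (binom_pmf_quadratic_moment n 1 (- / INR n) (INR n * p)) as Hmean.
  replace (1 + - / INR n * (INR n * p * (1 - p) + (INR n * p - INR n * p) ^ 2))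
    with (1 - p * (1 - p)) in Hmean by (field; lra).
  assert (3 / 4 <= 1 - p * (1 - p)) by (pose proof (pow2_ge_0 (p - 1 / 2)); nra).
  enough (sum_f_R0 (fun j => binom_pmf n j * (1 + - / INR n * (INR j - INR n * p) ^ 2)) n
          <= sum_f_R0 (fun j => binom_pmf n j * in_window (INR n * p) (sqrt (INR n)) j) n)
    by lra.
  apply sum_Rle; intros j _.
  apply Rmult_le_compat_l; [apply binom_pmf_ge0; lra|].
  unfold in_window; destruct Rle_dec as [Hin|Hout].
  - pose proof (pow2_ge_0 (INR j - INR n * p)); nra.
  - assert (Hsq : INR n < (INR j - INR n * p) ^ 2).
    { rewrite <- pow2_abs; pose proof (sqrt_sqrt (INR n) ltac:(lra)).
      pose proof (sqrt_pos (INR n)); nra. }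
    assert (/ INR n * INR n = 1) by (field; lra).
    nra.
Qed.

Lemma binom_pmf_le_in_window n i j :
  (i <= n)%nat -> INR n * p <= INR i <= INR n * p + 1 ->
  Rabs (INR j - INR n * p) <= sqrt (INR n) ->
  binom_pmf n j <= exp (2 / p) * binom_pmf n i.
Proof.
  intros Hin Hi Hj.
  pose proof (binom_pmf_ge0 n i ltac:(lra)).
  destruct (le_lt_dec i j) as [Hij|Hji].
  - assert (1 <= exp (2 / p)).
    { rewrite <- exp_0; left; apply exp_increasing, Rdiv_lt_0_compat; lra. }
    replace j with (i + (j - i))%nat by lia.
    pose proof (binom_pmf_decr_above_mean n i (j - i) (proj1 Hi)); nra.
  - assert (HnR : 1 <= INR n) by (apply (le_INR 1); lia).
    assert (Hnp : 0 < INR n * p) by nra.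
    assert (Hs : sqrt (INR n) <= INR n).
    { pose proof (sqrt_sqrt (INR n) ltac:(lra)).
      pose proof (sqrt_le_1_alt 1 (INR n) HnR); rewrite sqrt_1 in *; nra. }
    assert (Hdist : INR (i - j) * / (INR n * p) <= 2 / p).
    { assert (INR (i - j) <= 2 * INR n)
        by (rewrite minus_INR by lia; revert Hj; unfold Rabs; destruct Rcase_abs; lra).
      replace (2 / p) with (2 * INR n * / (INR n * p)) by (field; lra).
      apply Rmult_le_compat_r; [left; apply Rinv_0_lt_compat|]; lra. }
    assert (Hexp : exp (INR (i - j) * / (INR n * p)) <= exp (2 / p)).
    { destruct Hdist as [Hlt|Heq]; [left; apply exp_increasing; lra|rewrite Heq; lra]. }
    pose proof (pow_1plus_le_exp (/ (INR n * p)) (i - j)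
                  ltac:(left; apply Rinv_0_lt_compat; lra)).
    pose proof (binom_pmf_growth_below_mean n i (i - j) Hin (proj2 Hi) ltac:(lia)) as Hgrowth.
    replace (i - (i - j))%nat with j in Hgrowth by lia.
    eapply Rle_trans; [exact Hgrowth|]; apply Rmult_le_compat_r; lra.
Qed.

Lemma binom_pmf_near_mean_lower_bound n i : (1 <= n)%nat -> (i <= n)%nat ->
  INR n * p <= INR i <= INR n * p + 1 ->
  3 / 4 <= exp (2 / p) * binom_pmf n i * (2 * sqrt (INR n) + 1).
Proof.
  intros Hn Hin Hi.
  set (w := in_window (INR n * p) (sqrt (INR n))).
  assert (Hmode : 0 <= exp (2 / p) * binom_pmf n i).
  { apply Rmult_le_pos; [left; apply exp_pos|apply binom_pmf_ge0; lra]. }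
  assert (Hdom : sum_f_R0 (fun j => binom_pmf n j * w j) n
                 <= sum_f_R0 (fun j => w j * (exp (2 / p) * binom_pmf n i)) n).
  { apply sum_Rle; intros j _; rewrite Rmult_comm; unfold w, in_window.
    destruct Rle_dec as [Hj|_]; [|lra].
    pose proof (binom_pmf_le_in_window n i j Hin Hi Hj); lra. }
  rewrite <- scal_sum in Hdom.
  pose proof (binom_pmf_window_mass n Hn) as Hmass.
  pose proof (Rmult_le_compat_l _ _ _ Hmode
                (sum_in_window_le (INR n * p) (sqrt (INR n)) n (sqrt_pos _))).
  unfold w in Hdom; lra.
Qed.

Lemma binom_transform_ge_term (a : nat -> R) n i :
  (forall j, 0 <= a j) -> (i <= n)%nat -> binom_pmf n i * a i <= binom_transform p a n.
Proof.
  intros Ha Hin; unfold binom_transform.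
  rewrite (sum_eq _ (fun j => binom_pmf n j * a j))
    by (intros; rewrite binom_pmf_closed; auto).
  apply (sum_f_R0_ge_term (fun j => binom_pmf n j * a j)); auto.
  intros j; apply Rmult_le_pos; [apply binom_pmf_ge0; lra|auto].
Qed.

Lemma term_le_binom_transform_near_mean (a : nat -> R) n i :
  (forall j, 0 <= a j) -> (1 <= n)%nat -> (i <= n)%nat ->
  INR n * p <= INR i <= INR n * p + 1 ->
  3 / 4 * a i <= exp (2 / p) * (2 * sqrt (INR n) + 1) * binom_transform p a n.
Proof.
  intros Ha Hn Hin Hi.
  pose proof (binom_pmf_near_mean_lower_bound n i Hn Hin Hi) as Hlower.
  pose proof (binom_transform_ge_term a n i Ha Hin) as Hterm.
  assert (Hfactor : 0 <= exp (2 / p) * (2 * sqrt (INR n) + 1)).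
  { pose proof (exp_pos (2 / p)); pose proof (sqrt_pos (INR n)); nra. }
  pose proof (Rmult_le_compat_l _ _ _ Hfactor Hterm).
  pose proof (Rmult_le_compat_r _ _ _ (Ha i) Hlower); nra.
Qed.

End BinomialPmf.

Lemma two_sqrt_add1_le p m i : 0 < p -> 1 <= INR i -> INR m <= INR i / p ->
  2 * sqrt (INR m) + 1 <= (2 * sqrt (/ p) + 1) * sqrt (INR i).
Proof.
  intros Hp Hi Hm.
  assert (sqrt (INR m) <= sqrt (INR i) * sqrt (/ p)).
  { rewrite <- sqrt_mult by (try apply Rlt_le, Rinv_0_lt_compat; lra).
    apply sqrt_le_1_alt; exact Hm. }
  pose proof (sqrt_le_1_alt 1 (INR i) Hi); rewrite sqrt_1 in *.
  pose proof (sqrt_pos (/ p)); nra.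
Qed.

Lemma Un_cv_eventually_le (u : nat -> R) l :
  Un_cv u l -> exists N, forall n, (n >= N)%nat -> u n <= Rabs l + 1.
Proof.
  intros Hcv; destruct (Hcv 1 Rlt_0_1) as [N HN]; exists N; intros n Hn.
  specialize (HN n Hn); unfold R_dist in HN.
  revert HN; unfold Rabs; repeat destruct Rcase_abs; lra.
Qed.

Lemma exists_binom_index_near_mean p i : 0 < p < 1 ->
  exists n, (i <= n)%nat /\ INR n * p <= INR i <= INR n * p + 1 /\ INR n <= INR i / p.
Proof.
  intros Hp.
  assert (Hip : 0 <= INR i / p).
  { apply Rmult_le_pos; [apply pos_INR|left; apply Rinv_0_lt_compat; lra]. }
  destruct (base_Int_part (INR i / p)) as [Hfl1 Hfl2].
  assert (Hz : (0 <= Int_part (INR i / p))%Z).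
  { assert (Hgt : IZR (-1) < IZR (Int_part (INR i / p))) by lra.
    apply lt_IZR in Hgt; lia. }
  exists (Z.to_nat (Int_part (INR i / p))).
  assert (HnR : INR (Z.to_nat (Int_part (INR i / p))) = IZR (Int_part (INR i / p)))
    by (rewrite INR_IZR_INZ, Z2Nat.id; auto).
  assert (Hmul : INR i / p * p = INR i) by (field; lra).
  assert (HiR : INR i < INR (S (Z.to_nat (Int_part (INR i / p))))) by (rewrite S_INR; nra).
  apply INR_lt in HiR.
  rewrite HnR; repeat split; try lia; nra.
Qed.

Theorem lemma6 (a : nat -> R) (p : R) (l : R) :
  (forall n : nat, 0 <= a n) ->
  0 < p < 1 ->
  Un_cv (binom_transform p a) l ->
  bigO_nat a (fun n => sqrt (INR n)).
Proof.
  intros Ha Hp Hcv.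
  destruct (Un_cv_eventually_le _ _ Hcv) as [N HN].
  set (M := Rabs l + 1); set (K := exp (2 / p)); set (c := 2 * sqrt (/ p) + 1).
  assert (HM : 0 < M) by (pose proof (Rabs_pos l); unfold M; lra).
  assert (HK : 0 < K) by apply exp_pos.
  assert (Hc : 1 <= c) by (pose proof (sqrt_pos (/ p)); unfold c; lra).
  exists (4 / 3 * K * M * c); split; [apply Rmult_lt_0_compat; [|lra]; nra|].
  exists (Nat.max N 1); intros i Hi.
  assert (HiR : 1 <= INR i) by (apply (le_INR 1); lia).
  destruct (exists_binom_index_near_mean p i Hp) as [n [Hin [Hmean Hn]]].
  pose proof (term_le_binom_transform_near_mean p Hp a n i Ha ltac:(lia) Hin Hmean) as Hai.
  fold K in Hai.
  specialize (HN n ltac:(lia)); fold M in HN.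
  pose proof (two_sqrt_add1_le p n i (proj1 Hp) HiR Hn) as Hsqrt; fold c in Hsqrt.
  assert (Hfactor : 0 <= K * (2 * sqrt (INR n) + 1))
    by (pose proof (sqrt_pos (INR n)); nra).
  pose proof (Rmult_le_compat_l _ _ _ Hfactor HN).
  assert (K * (2 * sqrt (INR n) + 1) * M <= K * (c * sqrt (INR i)) * M)
    by (apply Rmult_le_compat_r, Rmult_le_compat_l; lra).
  lra.
Qed.
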